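(* Let $h$ be a positive integer and $L$ an $h$-modular lattice with zero. Let $x\in\mathcal{A}'$ and let $n,k$ be nonnegative integers. If $k\geq n$, then $x^{(k+1)}(a_n)=x^{(k)}(a_n)$ and $x^{(k+1)}(b_n)=x^{(k)}(b_n)$.
   Context: $K$ is the lattice consisting of $\varnothing$, $C=\{c\}$, $A_m=\{a_k:k\geq m\}$, $B_n=\{b_k:k\geq n\}$ ($m,n<\omega$), and $C\cup A_m\cup B_n$ with $|m-n|\leq1$, ordered by inclusion; $a_n,b_n,c$ denote $A_n,B_n,C$, so $\mathrm{J}(K)=\{c\}\cup\{a_n\}\cup\{b_n\}$ with $a_0>a_1>\cdots$, $b_0>b_1>\cdots$ and no other comparabilities. $\mathcal{A}$ is the set of antitone maps $x\colon\mathrm{J}(K)\to L$ with finite range. For $x\in\mathcal{A}$, $x(a_\infty)$, $x(b_\infty)$ are the eventual values of the increasing sequences $(x(a_n))$, $(x(b_n))$. The map $x^{(1)}$ is defined by $x^{(1)}(c)=x(c)\vee(x(a_\infty)\wedge x(b_\infty))$, $x^{(1)}(a_0)=x(a_0)$, $x^{(1)}(b_0)=x(b_0)$, $x^{(1)}(a_{n+1})=x(a_{n+1})\vee(x(b_n)\wedge x(c))$, $x^{(1)}(b_{n+1})=x(b_{n+1})\vee(x(a_n)\wedge x(c))$; $\mathcal{A}$ is closed under $x\mapsto x^{(1)}$, and $x^{(0)}=x$, $x^{(k+1)}=(x^{(k)})^{(1)}$. Put $\ell(x)=\langle x(a_\infty),x(b_\infty),x(c)\rangle$ and $\mathcal{A}'=\{x\in\mathcal{A}:\ell(x^{(1)})=\ell(x)\}$.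 $L$ is $h$-modular if $u^{(h+1)}=u^{(h)}$ for all $u\in L^3$, where $\langle x,y,z\rangle^{(1)}=\langle x\vee(y\wedge z),y\vee(x\wedge z),z\vee(x\wedge y)\rangle$. *)

From mathcomp Require Import all_boot all_order.
From Stdlib Require Import ClassicalEpsilon.
Set Implicit Arguments. Unset Strict Implicit. Unset Printing Implicit Defensive.
Import Order.TTheory.
Local Open Scope order_scope.

(* The join-irreducibles J(K) = {c} ∪ {a_n} ∪ {b_n}. *)
Inductive JK : Type := Jc | Ja of nat | Jb of nat.

Definition jge (p q : JK) : Prop :=
  match p, q with
  | Jc, Jc => True
  | Ja n, Ja m => (n <= m)%N
  | Jb n, Jb m => (n <= m)%N
  | _, _ => False
  end.

Section Defs.
Context {disp : Order.disp_t} {L : bLatticeType disp}.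

Definition antitone (x : JK -> L) : Prop :=
  forall p q, jge p q -> x p <= x q.

Definition finite_range (x : JK -> L) : Prop :=
  exists s : seq L, forall p, x p \in s.

Definition inA (x : JK -> L) : Prop := antitone x /\ finite_range x.

(* eventual value of a sequence (chosen by epsilon; for x in A it is the
   eventual value of the increasing sequence with finite range) *)
Definition eventual (f : nat -> L) : L :=
  epsilon (inhabits \bot) (fun v => exists N, forall n, (N <= n)%N -> f n = v).

Definition x_ainf (x : JK -> L) : L := eventual (fun n => x (Ja n)).
Definition x_binf (x : JK -> L) : L := eventual (fun n => x (Jb n)).

Definition step (x : JK -> L) : JK -> L :=
  fun p => match p with
  | Jc => x Jc `|` (x_ainf x `&` x_binf x)
  | Ja 0 => x (Ja 0)
  | Jb 0 => x (Jb 0)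
  | Ja n.+1 => x (Ja n.+1) `|` (x (Jb n) `&` x Jc)
  | Jb n.+1 => x (Jb n.+1) `|` (x (Ja n) `&` x Jc)
  end.

Definition stepk (k : nat) (x : JK -> L) : JK -> L := iter k step x.

Definition ell (x : JK -> L) : L * L * L := (x_ainf x, x_binf x, x Jc).

Definition inA' (x : JK -> L) : Prop := inA x /\ ell (step x) = ell x.

Definition tri_step (u : L * L * L) : L * L * L :=
  let: (x, y, z) := u in
  (x `|` (y `&` z), y `|` (x `&` z), z `|` (x `&` y)).

End Defs.

Definition hmodular (h : nat) {disp : Order.disp_t} (L : bLatticeType disp) : Prop :=
  forall u : L * L * L, iter h.+1 tri_step u = iter h tri_step u.

(* Since [x] is eventually constant along both chains, [ell (step x)] is
   [tri_step (ell x)]; hence [inA'] is preserved by [step], and in particular the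
   value at [c] never changes along the orbit of [x].  Induction on [n] then
   shows that once [a_n], [b_n] and [c] are fixed at stage [k], the terms
   [x (b_n) `&` x c] and [x (a_n) `&` x c] that [step] adds at [a_(n+1)] and
   [b_(n+1)] have already been absorbed at stage [k + 1]. *)

From mathcomp Require Import all_boot all_order.
From Stdlib Require Import Classical ClassicalEpsilon.
Import Order.TTheory.
Local Open Scope order_scope.

Lemma nondecreasing_finite_range_stable {disp : Order.disp_t} {T : porderType disp}
    (s : seq T) (f : nat -> T) :
  {homo f : m n / (m <= n)%N >-> m <= n} -> (forall n, f n \in s) ->
  exists N, forall n, (N <= n)%N -> f n = f N.
Proof.
elim: s f => [|a s IHs] f f_homo f_in; first by have := f_in 0%N.
(* Either [f] eventually avoids [a], and the tail of [f] ranges in [s], or [f]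
   takes the value [a] cofinally, and then monotonicity pins it to [a]. *)
have [[n0 tail_ne_a] | a_cofinal] :=
  classic (exists n0, forall n, (n0 <= n)%N -> f n != a).
- pose g m := f (n0 + m)%N.
  have g_homo : {homo g : m n / (m <= n)%N >-> m <= n}.
    by move=> m n mn; apply: f_homo; rewrite leq_add2l.
  have g_in m : g m \in s.
    by have := f_in (n0 + m)%N; rewrite inE (negbTE (tail_ne_a _ (leq_addr _ _))).
  have [N gN] := IHs g g_homo g_in.
  exists (n0 + N)%N => n le_n; rewrite -(subnKC (leq_trans (leq_addr _ _) le_n)).
  by apply: gN; rewrite leq_subRL ?(leq_trans (leq_addr _ _) le_n).
- have a_after n0 : exists2 n, (n0 <= n)%N & f n = a.
    apply: NNPP => no_a; apply: a_cofinal; exists n0 => n le_n.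
    by apply/eqP => fn; apply: no_a; exists n.
  have [m0 _ fm0] := a_after 0%N.
  exists m0 => n le_n; have [m le_m fm] := a_after n.
  by rewrite fm0; apply: le_anti; rewrite -{1}fm -fm0 !f_homo.
Qed.

Section Step.
Context {disp : Order.disp_t} {L : bLatticeType disp}.
Implicit Types (x : JK -> L) (f : nat -> L).

Lemma eventualE f N v : (forall n, (N <= n)%N -> f n = v) -> eventual f = v.
Proof.
move=> f_v; rewrite /eventual.
have f_ev : exists v N, forall n, (N <= n)%N -> f n = v by exists v, N.
have [N' f_eps] := epsilon_spec (inhabits \bot) _ f_ev.
by rewrite -(f_eps (maxn N N')) ?leq_maxr // f_v ?leq_maxl.
Qed.

Lemma inA_eventually x : inA x ->
  exists N, forall n, (N <= n)%N -> x (Ja n) = x_ainf x /\ x (Jb n) = x_binf x.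
Proof.
case=> x_anti [s x_in].
have [Na xa_stable] := @nondecreasing_finite_range_stable _ _ s (fun n => x (Ja n))
  (fun n m => x_anti (Ja n) (Ja m)) (fun n => x_in _).
have [Nb xb_stable] := @nondecreasing_finite_range_stable _ _ s (fun n => x (Jb n))
  (fun n m => x_anti (Jb n) (Jb m)) (fun n => x_in _).
rewrite /x_ainf /x_binf (eventualE _ _ _ xa_stable) (eventualE _ _ _ xb_stable).
exists (maxn Na Nb) => n; rewrite geq_max => /andP[le_a le_b].
by rewrite xa_stable ?xb_stable.
Qed.

Lemma step_inA x : inA x -> inA (step x).
Proof.
case=> x_anti [s x_in]; split.
  case=> [|[|n]|[|n]] [|[|m]|[|m]] //= nm;
    first [by apply: le_trans (leUl _ _); apply: x_anti
          |by apply: leU2; [|apply: leI2]; apply: x_anti].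
exists (step x Jc :: s ++ [seq y `|` (z `&` x Jc) | y <- s, z <- s]).
case=> [|[|n]|[|n]]; rewrite /= inE mem_cat ?x_in ?eqxx ?orbT //;
  by rewrite (allpairs_f (fun y z => y `|` (z `&` x Jc))) ?orbT.
Qed.

Lemma ell_step x : inA x -> ell (step x) = tri_step (ell x).
Proof.
move=> /inA_eventually[N x_stable].
have step_ainf : x_ainf (step x) = x_ainf x `|` (x_binf x `&` x Jc).
  apply: (eventualE _ N.+1) => -[|n] // le_n /=.
  by rewrite (proj1 (x_stable n.+1 (ltnW le_n))) (proj2 (x_stable n le_n)).
have step_binf : x_binf (step x) = x_binf x `|` (x_ainf x `&` x Jc).
  apply: (eventualE _ N.+1) => -[|n] // le_n /=.
  by rewrite (proj2 (x_stable n.+1 (ltnW le_n))) (proj1 (x_stable n le_n)).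
by rewrite /ell step_ainf step_binf.
Qed.

Lemma step_inA' x : inA' x -> inA' (step x).
Proof.
case=> x_A ell_x; split; first exact: step_inA.
by rewrite (ell_step _ (step_inA _ x_A)) ell_x -(ell_step _ x_A) ell_x.
Qed.

Lemma stepk_inA' x k : inA' x -> inA' (stepk k x).
Proof. by move=> x_A'; elim: k => //= k; apply: step_inA'. Qed.

Lemma stepkS_c x k : inA' x -> stepk k.+1 x Jc = stepk k x Jc.
Proof. by move=> /(stepk_inA' _ k)[_ /(congr1 snd)]. Qed.

Lemma step_aS x n : step x (Ja n.+1) = x (Ja n.+1) `|` (x (Jb n) `&` x Jc).
Proof. by []. Qed.

Lemma step_bS x n : step x (Jb n.+1) = x (Jb n.+1) `|` (x (Ja n) `&` x Jc).
Proof. by []. Qed.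

(* [x (Jb n) `&` x Jc] is already below [step x (Ja n.+1)], so joining it a
   second time changes nothing. *)
Lemma step2_succ x n :
  step x Jc = x Jc -> step x (Ja n) = x (Ja n) -> step x (Jb n) = x (Jb n) ->
  step (step x) (Ja n.+1) = step x (Ja n.+1) /\
  step (step x) (Jb n.+1) = step x (Jb n.+1).
Proof.
move=> fix_c fix_a fix_b.
split; first by rewrite [LHS]step_aS fix_b fix_c step_aS -joinA joinxx.
by rewrite [LHS]step_bS fix_a fix_c step_bS -joinA joinxx.
Qed.

End Step.

Theorem lemma5p5 (disp : Order.disp_t) (L : bLatticeType disp) (h : nat) :
  (0 < h)%N -> hmodular h L ->
  forall x : JK -> L, inA' x ->
  forall n k : nat, (n <= k)%N ->
    stepk k.+1 x (Ja n) = stepk k x (Ja n) /\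
    stepk k.+1 x (Jb n) = stepk k x (Jb n).
Proof.
move=> _ _ x x_A' n; elim: n => [|n IHn] [|k] // le_nk.
have [fix_a fix_b] := IHn k le_nk.
exact: step2_succ (stepk k x) n (stepkS_c x k x_A') fix_a fix_b.
Qed.
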